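(* Let $R=R_1\times\cdots\times R_n$ be a direct product of commutative rings with nonzero identity and let $I=I_1\times\cdots\times I_n$ be an ideal of $R$, with $I_i$ an ideal of $R_i$. If $x_i$ is adjacent to $y_i$ in $\Gamma''_{I_i}(R_i)$ for some $1\leq i\leq n$, then every element of $R$ with $i$-th component $x_i$ is adjacent in $\Gamma''_I(R)$ to every element of $R$ with $i$-th component $y_i$.
   Context: The product has componentwise operations. For a commutative ring $S$ and an ideal $J$ of $S$, $\Gamma''_J(S)$ is the simple undirected graph whose vertex set is $\{x\in S\setminus J : xS+J\neq S\}$, with distinct vertices $x,y$ adjacent if and only if $x\notin yS+J$ and $y\notin xS+J$. *)

From mathcomp Require Import all_boot all_algebra.
Set Implicit Arguments. Unset Strict Implicit. Unset Printing Implicit Defensive.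
Import GRing.Theory.
Local Open Scope ring_scope.

(* Generic version of the graph Gamma''_J(S), stated for a carrier T with an
   addition, a multiplication and an ideal J (given as a predicate).  It is
   instantiated both for a comNzRingType and for the direct product of rings
   (dependent functions with componentwise operations). *)

Definition in_span {T : Type} (add mul : T -> T -> T) (J : T -> Prop) (y x : T) : Prop :=
  exists s j, J j /\ x = add (mul y s) j.

Definition gvert {T : Type} (add mul : T -> T -> T) (J : T -> Prop) (x : T) : Prop :=
  ~ J x /\ ~ (forall z, in_span add mul J x z).

Definition gadj {T : Type} (add mul : T -> T -> T) (J : T -> Prop) (x y : T) : Prop :=
  [/\ x <> y, gvert add mul J x, gvert add mul J y,
      ~ in_span add mul J y x & ~ in_span add mul J x y].

Definition is_ideal (S : comNzRingType) (J : {pred S}) : Prop :=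
  [/\ 0 \in J, {in J &, forall u v, u + v \in J} & forall a, {in J, forall u, a * u \in J}].

Definition adjGamma (S : comNzRingType) (J : {pred S}) (x y : S) : Prop :=
  gadj +%R *%R (fun z => z \in J) x y.

Definition prodR (n : nat) (R : 'I_n -> comNzRingType) : Type := forall i, R i.
Definition prod_add n (R : 'I_n -> comNzRingType) (x y : prodR R) : prodR R :=
  fun i => x i + y i.
Definition prod_mul n (R : 'I_n -> comNzRingType) (x y : prodR R) : prodR R :=
  fun i => x i * y i.
Definition prod_ideal n (R : 'I_n -> comNzRingType) (I : forall i, {pred R i})
  (x : prodR R) : Prop := forall i, x i \in I i.

Definition adjGamma_prod n (R : 'I_n -> comNzRingType) (I : forall i, {pred R i})
  (x y : prodR R) : Prop :=
  gadj (@prod_add n R) (@prod_mul n R) (prod_ideal I) x y.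

From mathcomp Require Import all_boot all_algebra.
Import GRing.Theory.
Local Open Scope ring_scope.

(* Both membership in yR + I and membership in I are witnessed componentwise,
   so every such witness in R projects to one in R_i.  Hence each
   non-membership in R_i lifts to R; in particular, if xR + I = R then
   1 = xs + j projects to 1 \in x_i R_i + I_i, so a vertex x_i of
   Gamma''_{I_i}(R_i) makes x a vertex of Gamma''_I(R). *)

Lemma in_span_full_of_one (S : comNzRingType) (J : {pred S}) (x : S) :
  is_ideal J -> in_span +%R *%R (fun z => z \in J) x 1 ->
  forall z, in_span +%R *%R (fun z => z \in J) x z.
Proof.
move=> [_ _ J_mul] [s [j [Jj def1]]] z.
exists (s * z), (j * z); split; first by rewrite mulrC J_mul.
by rewrite mulrA -mulrDl -def1 mul1r.
Qed.

Section ProductProjection.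

Variables (n : nat) (R : 'I_n -> comNzRingType) (I : forall i, {pred R i}).

Lemma prod_in_span_proj (i : 'I_n) (x y : prodR R) :
  in_span (@prod_add n R) (@prod_mul n R) (prod_ideal I) y x ->
  in_span +%R *%R (fun z => z \in I i) (y i) (x i).
Proof.
move=> [s [j [Ij def_x]]]; exists (s i), (j i); split; first exact: Ij.
by rewrite def_x.
Qed.

Lemma prod_gvert_of_proj (i : 'I_n) (x : prodR R) :
  is_ideal (I i) -> gvert +%R *%R (fun z => z \in I i) (x i) ->
  gvert (@prod_add n R) (@prod_mul n R) (prod_ideal I) x.
Proof.
move=> idealIi [xi_notin_I xi_span_proper]; split.
  by move=> Ix; apply: xi_notin_I; exact: Ix.
move=> x_span_full; apply: xi_span_proper.
apply: in_span_full_of_one => //.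
exact: prod_in_span_proj (x_span_full (fun k => 1)).
Qed.

End ProductProjection.

Theorem lemma2p1 (n : nat) (R : 'I_n -> comNzRingType)
  (I : forall i, {pred R i}) (hI : forall i, is_ideal (I i))
  (i : 'I_n) (xi yi : R i) :
  adjGamma (I i) xi yi ->
  forall x y : prodR R, x i = xi -> y i = yi -> adjGamma_prod I x y.
Proof.
move=> adj_xi_yi x y def_xi def_yi; subst xi yi.
case: adj_xi_yi => xi_neq_yi vert_xi vert_yi xi_notin_span_yi yi_notin_span_xi.
split.
- by move=> eq_xy; apply: xi_neq_yi; rewrite eq_xy.
- exact: prod_gvert_of_proj (hI i) vert_xi.
- exact: prod_gvert_of_proj (hI i) vert_yi.
- by move=> span_yx; apply: xi_notin_span_yi; exact: prod_in_span_proj span_yx.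
- by move=> span_xy; apply: yi_notin_span_xi; exact: prod_in_span_proj span_xy.
Qed.
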